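(* For every $0<\sigma<1$ and every integer $n\ge1$, $$\sum_{j=0}^n\sigma^{\sqrt{j}+\sqrt{n-j}-\sqrt{n}}\le\frac{20}{(1-\sigma)^2}.$$ *)

From Stdlib Require Import Reals.

(* Write t = sqrt sigma and ⌊√k⌋ for the integer square root. Since
   √a + √b - √(a+b) >= √a / 2 for a <= b, the j-th term is at most
   t^⌊√m⌋ with m = min (j, n - j), so the whole sum is at most 2 Σ_(k<=n) t^⌊√k⌋.
   Each value i of ⌊√k⌋ is taken by 2i+1 integers k, hence
   Σ_k t^⌊√k⌋ <= Σ_i (2i+1) t^i = (1+t)/(1-t)^2 = (1+t)^3/(1-sigma)^2,
   which is at most 8/(1-sigma)^2. *)
From Stdlib Require Import Reals.
From Stdlib Require Import Lra Lia Psatz.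
Open Scope R_scope.

Fixpoint odd_weighted_pow_sum (t : R) (m : nat) : R :=
  match m with
  | O => 0
  | S m' => odd_weighted_pow_sum t m' + (2 * INR m' + 1) * t ^ m'
  end.

Lemma odd_weighted_pow_sum_closed (t : R) (m : nat) : t <> 1 ->
  odd_weighted_pow_sum t m =
  (1 + t) / (1 - t) ^ 2 - t ^ m * ((2 * INR m + 1) / (1 - t) + 2 * t / (1 - t) ^ 2).
Proof.
  intro Ht. assert (Ht' : 1 - t <> 0) by lra.
  induction m as [|m IH]; simpl odd_weighted_pow_sum.
  - simpl. field. exact Ht'.
  - rewrite IH, S_INR. simpl pow. field. exact Ht'.
Qed.

Lemma odd_weighted_pow_sum_le (t : R) (m : nat) : 0 <= t < 1 ->
  odd_weighted_pow_sum t m <= (1 + t) / (1 - t) ^ 2.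
Proof.
  intros [Ht0 Ht1]. rewrite odd_weighted_pow_sum_closed by lra.
  assert (Hpos : 0 <= (2 * INR m + 1) / (1 - t) + 2 * t / (1 - t) ^ 2).
  { pose proof (pos_INR m).
    assert (0 < / (1 - t)) by (apply Rinv_0_lt_compat; lra).
    assert (0 < / (1 - t) ^ 2) by (apply Rinv_0_lt_compat; nra).
    unfold Rdiv. nra. }
  pose proof (pow_le t m Ht0). nra.
Qed.

Lemma sum_pow_nat_sqrt (t : R) (N : nat) :
  sum_f_R0 (fun k => t ^ Nat.sqrt k) N =
  odd_weighted_pow_sum t (Nat.sqrt N)
  + (INR (N - Nat.sqrt N * Nat.sqrt N) + 1) * t ^ Nat.sqrt N.
Proof.
  induction N as [|N IH].
  - simpl. lra.
  - rewrite tech5, IH.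
    pose proof (Nat.sqrt_spec N (Nat.le_0_l _)).
    pose proof (Nat.sqrt_spec (S N) (Nat.le_0_l _)).
    destruct (Nat.sqrt_succ_or N) as [E|E]; rewrite E in *.
    + replace (N - Nat.sqrt N * Nat.sqrt N)%nat with (2 * Nat.sqrt N)%nat by nia.
      replace (S N - S (Nat.sqrt N) * S (Nat.sqrt N))%nat with 0%nat by nia.
      simpl odd_weighted_pow_sum. rewrite mult_INR. simpl INR. ring.
    + replace (S N - Nat.sqrt N * Nat.sqrt N)%nat
        with (S (N - Nat.sqrt N * Nat.sqrt N)) by nia.
      rewrite S_INR. ring.
Qed.

Lemma sum_pow_nat_sqrt_le (t : R) (N : nat) : 0 <= t < 1 ->
  sum_f_R0 (fun k => t ^ Nat.sqrt k) N <= (1 + t) / (1 - t) ^ 2.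
Proof.
  intros Ht. apply Rle_trans with (odd_weighted_pow_sum t (S (Nat.sqrt N))).
  - rewrite sum_pow_nat_sqrt. simpl odd_weighted_pow_sum.
    pose proof (Nat.sqrt_spec N (Nat.le_0_l _)).
    assert (INR (N - Nat.sqrt N * Nat.sqrt N) <= 2 * INR (Nat.sqrt N)).
    { rewrite <- (mult_INR 2). apply le_INR. nia. }
    pose proof (pow_le t (Nat.sqrt N) (proj1 Ht)). nra.
  - apply odd_weighted_pow_sum_le. exact Ht.
Qed.

Lemma sum_f_R0_rev (f : nat -> R) (N : nat) :
  sum_f_R0 (fun j => f (N - j)%nat) N = sum_f_R0 f N.
Proof.
  induction N as [|N IH].
  - reflexivity.
  - rewrite decomp_sum, tech5, <- IH by lia. simpl Init.Nat.pred.
    rewrite Nat.sub_0_r.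
    rewrite (sum_eq (fun i => f (S N - S i)%nat) (fun j => f (N - j)%nat)) by reflexivity.
    ring.
Qed.

Lemma sqrt_add_defect_ge (a b : R) : 0 <= a <= b ->
  sqrt a / 2 <= sqrt a + sqrt b - sqrt (a + b).
Proof.
  intros [Ha Hab].
  (* (√b + √a/2)^2 = b + √a √b + a/4 >= a + b because √a √b >= a. *)
  pose proof (sqrt_pos a). pose proof (sqrt_pos b). pose proof (sqrt_pos (a + b)).
  pose proof (sqrt_sqrt a Ha). pose proof (sqrt_sqrt b ltac:(lra)).
  pose proof (sqrt_sqrt (a + b) ltac:(lra)).
  assert (sqrt a <= sqrt b) by (apply sqrt_le_1_alt; lra).
  nra.
Qed.

Lemma INR_nat_sqrt_le (q : nat) : INR (Nat.sqrt q) <= sqrt (INR q).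
Proof.
  rewrite <- (sqrt_pow2 (INR (Nat.sqrt q))) by apply pos_INR.
  apply sqrt_le_1_alt. rewrite <- pow_INR. apply le_INR.
  rewrite Nat.pow_2_r. apply Nat.sqrt_spec, Nat.le_0_l.
Qed.

Lemma Rpower_le_contravar (s x y : R) : 0 < s < 1 -> x <= y ->
  Rpower s y <= Rpower s x.
Proof.
  intros Hs Hxy. unfold Rpower.
  assert (ln s < 0) by (rewrite <- ln_1; apply ln_increasing; lra).
  destruct (Req_dec x y) as [->|Hne]; [lra|].
  left. apply exp_increasing. nra.
Qed.

Lemma Rpower_half_INR (s : R) (q : nat) : 0 < s ->
  Rpower s (INR q / 2) = sqrt s ^ q.
Proof.
  intro Hs. rewrite <- Rpower_sqrt by exact Hs.
  rewrite <- Rpower_pow by apply exp_pos.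
  rewrite Rpower_mult. f_equal. field.
Qed.

Lemma Rpower_sqrt_defect_le_l (s : R) (a b : nat) : 0 < s < 1 -> (a <= b)%nat ->
  Rpower s (sqrt (INR a) + sqrt (INR b) - sqrt (INR (a + b))) <= sqrt s ^ Nat.sqrt a.
Proof.
  intros Hs Hab. rewrite <- Rpower_half_INR by lra.
  apply Rpower_le_contravar; [exact Hs|].
  rewrite plus_INR. pose proof (INR_nat_sqrt_le a).
  pose proof (sqrt_add_defect_ge (INR a) (INR b)
                ltac:(split; [apply pos_INR | apply le_INR; exact Hab])).
  lra.
Qed.

Lemma Rpower_sqrt_defect_le (s : R) (a b : nat) : 0 < s < 1 ->
  Rpower s (sqrt (INR a) + sqrt (INR b) - sqrt (INR (a + b)))
  <= sqrt s ^ Nat.sqrt a + sqrt s ^ Nat.sqrt b.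
Proof.
  intros Hs.
  pose proof (pow_le _ (Nat.sqrt a) (sqrt_pos s)).
  pose proof (pow_le _ (Nat.sqrt b) (sqrt_pos s)).
  destruct (Nat.le_ge_cases a b) as [Hab|Hba].
  - pose proof (Rpower_sqrt_defect_le_l s a b Hs Hab). lra.
  - pose proof (Rpower_sqrt_defect_le_l s b a Hs Hba) as Hb.
    rewrite (Nat.add_comm b), (Rplus_comm (sqrt (INR b))) in Hb. lra.
Qed.

Lemma one_add_sqrt_div_sq_le (s : R) : 0 <= s < 1 ->
  (1 + sqrt s) / (1 - sqrt s) ^ 2 <= 8 / (1 - s) ^ 2.
Proof.
  intros Hs.
  pose proof (sqrt_pos s). pose proof (sqrt_sqrt s (proj1 Hs)).
  assert (sqrt s < 1) by (rewrite <- sqrt_1; apply sqrt_lt_1_alt; lra).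
  assert (Hfactor : 1 - s = (1 - sqrt s) * (1 + sqrt s)) by nra.
  replace ((1 + sqrt s) / (1 - sqrt s) ^ 2) with ((1 + sqrt s) ^ 3 / (1 - s) ^ 2)
    by (rewrite Hfactor; field; split; lra).
  apply Rmult_le_compat_r.
  - apply Rlt_le, Rinv_0_lt_compat. nra.
  - nra.
Qed.

Theorem lemma5p8 (sigma : R) (n : nat) :
  0 < sigma -> sigma < 1 -> (1 <= n)%nat ->
  sum_f_R0 (fun j => Rpower sigma (sqrt (INR j) + sqrt (INR (n - j)) - sqrt (INR n))) n
  <= 20 / (1 - sigma) ^ 2.
Proof.
  intros Hs0 Hs1 _.
  set (t := sqrt sigma).
  assert (Ht : 0 <= t < 1).
  { split; [apply sqrt_pos|]. unfold t. rewrite <- sqrt_1. apply sqrt_lt_1_alt. lra. }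
  apply Rle_trans with (sum_f_R0 (fun j => t ^ Nat.sqrt j + t ^ Nat.sqrt (n - j)) n).
  { apply sum_Rle. intros j Hj.
    pose proof (Rpower_sqrt_defect_le sigma j (n - j) ltac:(lra)) as Hterm.
    replace (j + (n - j))%nat with n in Hterm by lia. exact Hterm. }
  rewrite plus_sum, (sum_f_R0_rev (fun k => t ^ Nat.sqrt k)).
  pose proof (sum_pow_nat_sqrt_le t n Ht).
  pose proof (one_add_sqrt_div_sq_le sigma ltac:(lra)) as Hs8. fold t in Hs8.
  assert (0 < / (1 - sigma) ^ 2) by (apply Rinv_0_lt_compat; nra).
  unfold Rdiv in *. lra.
Qed.
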